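(* Let $\xi,\eta>0$, $p>2$, and $\lambda>1$ with $\lambda^2\left(1-\frac{1}{\lambda^2}\right)^{p/2}\ge 1$, and let $t\in[0,1]$. For $(x_1,y_1)\in[0,1/\lambda]\times[0,1/\lambda]$ define $$F(x_1,y_1)=\lambda^p(\xi x_1+\eta t y_1)^p+\left(\xi^2+\eta^2t^2-2\eta\xi t x_1y_1+2\eta\xi t\sqrt{1-x_1^2}\sqrt{1-y_1^2}\right)^{p/2}.$$ Then $$\max\left\{F(x_1,y_1):0\le x_1,y_1\le\tfrac{1}{\lambda}\right\}\le\max\Big\{\left(1+\lambda^{-2p/(p-2)}\right)(\xi+\eta t)^p;\ (\xi+\eta t)^p+\left(\xi^2+\eta^2t^2-\tfrac{4\eta\xi t}{\lambda^2}+2\eta\xi t\right)^{p/2};\ (\xi+\eta)^p+(\xi+\eta t)^{p-2}\cdot\tfrac{2[\xi-(2\eta\xi-\eta)t]}{\lambda^2}\Big\}.$$ *)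

From Stdlib Require Import Reals.
Open Scope R_scope.

(* Real power a^b for a >= 0 (Stdlib's Rpower is only meaningful for a > 0;
   we set 0^b := 0, the correct value for b > 0, which is the only case used). *)
Definition rpow (a b : R) : R := if Rle_dec a 0 then 0 else Rpower a b.

Definition F (xi eta p lam t x1 y1 : R) : R :=
  rpow lam p * rpow (xi * x1 + eta * t * y1) p
  + rpow (xi ^ 2 + eta ^ 2 * t ^ 2 - 2 * eta * xi * t * x1 * y1
          + 2 * eta * xi * t * sqrt (1 - x1 ^ 2) * sqrt (1 - y1 ^ 2)) (p / 2).

(* Put q := p/2 >= 1 and phi(s) := s^q, a convex increasing function on [0, oo).
   Since (lam (xi x1 + eta t y1))^p = phi(U) with U := lam^2 (xi x1 + eta t y1)^2,
   F = phi(U) + phi(V), where V is the base of the second summand of F.  Both U and V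
   are at most K := (xi + eta t)^2, and an AM-GM estimate using lam^2 >= 2 (which
   follows from the hypothesis on lam) gives U + V <= K + G, where G is the base of the
   second power in the middle alternative of the maximum.  Hence (K, G) weakly
   majorizes (U, V), and convexity of phi yields phi(U) + phi(V) <= phi(K) + phi(G):
   F is bounded by the middle alternative alone. *)

From Stdlib Require Import Reals Lra Psatz.
Open Scope R_scope.

Lemma rpow_ge0 a b : 0 <= rpow a b.
Proof.
  unfold rpow; destruct (Rle_dec a 0); [lra|].
  left; apply exp_pos.
Qed.

Lemma rpow_Rpower a b : 0 < a -> rpow a b = Rpower a b.
Proof. intros; unfold rpow; destruct (Rle_dec a 0); lra. Qed.

Lemma rpow_le_l a c b : 0 <= b -> a <= c -> rpow a b <= rpow c b.
Proof.
  intros hb hac; unfold rpow at 1; destruct (Rle_dec a 0).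
  - apply rpow_ge0.
  - rewrite rpow_Rpower by lra; apply Rle_Rpower_l; lra.
Qed.

Lemma rpow_mult_distr u v p :
  0 <= u -> 0 <= v -> rpow u p * rpow v p = rpow (u * v) p.
Proof.
  intros [hu|<-] [hv|<-]; unfold rpow.
  - destruct (Rle_dec u 0), (Rle_dec v 0), (Rle_dec (u * v) 0); try nra.
    apply Rpower_mult_distr; lra.
  - destruct (Rle_dec 0 0), (Rle_dec (u * 0) 0); lra.
  - destruct (Rle_dec 0 0), (Rle_dec (0 * v) 0); lra.
  - destruct (Rle_dec 0 0), (Rle_dec (0 * 0) 0); lra.
Qed.

Lemma rpow_sqr u p : 0 <= u -> rpow u p = rpow (u ^ 2) (p / 2).
Proof.
  intros [hu|<-].
  - rewrite !rpow_Rpower by nra.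
    rewrite <- (Rpower_pow 2 u) by lra.
    rewrite Rpower_mult; f_equal; simpl; field.
  - unfold rpow; destruct (Rle_dec 0 0), (Rle_dec (0 ^ 2) 0); simpl in *; lra.
Qed.

Lemma Rpower_1_l x : Rpower 1 x = 1.
Proof. unfold Rpower; rewrite ln_1, Rmult_0_r; apply exp_0. Qed.

Lemma rpow_le_self w q : 0 < w <= 1 -> 1 <= q -> rpow w q <= w.
Proof.
  intros hw hq; rewrite rpow_Rpower by lra.
  replace q with (1 + (q - 1)) by ring.
  rewrite Rpower_plus, Rpower_1 by lra.
  assert (Rpower w (q - 1) <= 1).
  { rewrite <- (Rpower_1_l (q - 1)) at 2; apply Rle_Rpower_l; lra. }
  assert (0 < Rpower w (q - 1)) by apply exp_pos.
  nra.
Qed.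

Lemma Rpower_bernoulli x q : 0 < x -> 1 <= q -> 1 + q * (x - 1) <= Rpower x q.
Proof.
  intros hx hq.
  assert (h_tangent : 1 + (q - 1) * ln x <= Rpower x (q - 1)).
  { unfold Rpower; rewrite Rmult_comm; apply exp_ineq1_le. }
  (* [ln (1/x) <= 1/x - 1], multiplied by [x] *)
  assert (h_xlnx : x - 1 <= x * ln x).
  { pose proof (exp_ineq1_le (ln (/ x))) as h.
    rewrite exp_ln, ln_Rinv in h by (try apply Rinv_0_lt_compat; lra).
    assert (hmul : x * (1 - ln x) <= x * / x) by (apply Rmult_le_compat_l; lra).
    rewrite Rinv_r in hmul by lra; lra. }
  replace q with (1 + (q - 1)) at 2 by ring.
  rewrite Rpower_plus, Rpower_1 by lra.
  assert (x * (1 + (q - 1) * ln x) <= x * Rpower x (q - 1))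
    by (apply Rmult_le_compat_l; lra).
  assert ((q - 1) * (x - 1) <= (q - 1) * (x * ln x))
    by (apply Rmult_le_compat_l; lra).
  nra.
Qed.

Lemma Rpower_convex A C th q : 0 < A -> 0 < C -> 0 <= th <= 1 -> 1 <= q ->
  Rpower (th * A + (1 - th) * C) q <= th * Rpower A q + (1 - th) * Rpower C q.
Proof.
  intros hA hC hth hq; set (M := th * A + (1 - th) * C).
  assert (hM : 0 < M) by (unfold M; destruct (Req_dec th 0); nra).
  assert (hMq : 0 < Rpower M q) by apply exp_pos.
  (* Bernoulli at [A/M] and [C/M]: the tangent line of [s^q] at [M] *)
  assert (hsplit : forall Z, 0 < Z ->
            Rpower M q * (1 + q * (Z / M - 1)) <= Rpower Z q).
  { intros Z hZ.
    replace (Rpower Z q) with (Rpower M q * Rpower (Z / M) q).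
    - apply Rmult_le_compat_l; [lra|].
      apply Rpower_bernoulli; [apply Rdiv_lt_0_compat|]; lra.
    - rewrite Rpower_mult_distr by (try apply Rdiv_lt_0_compat; lra).
      f_equal; field; lra. }
  pose proof (hsplit A hA) as hTA; pose proof (hsplit C hC) as hTC.
  assert (th * (1 + q * (A / M - 1)) + (1 - th) * (1 + q * (C / M - 1)) = 1)
    by (unfold M in *; field; lra).
  nra.
Qed.

Lemma rpow_sum_le_majorizing U V K G q :
  1 <= q -> 0 < G -> U <= K -> V <= K -> U + V <= K + G ->
  rpow U q + rpow V q <= rpow K q + rpow G q.
Proof.
  intros hq hG hUK hVK hsum.
  destruct (Rle_dec V G) as [hVG|hVG].
  - pose proof (rpow_le_l U K q ltac:(lra) hUK).
    pose proof (rpow_le_l V G q ltac:(lra) hVG); lra.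
  - (* [V] and [K + G - V] are convex combinations of [K] and [G] with swapped weights *)
    set (th := (V - G) / (K - G)).
    assert (hth_def : th * (K - G) = V - G) by (unfold th; field; lra).
    assert (hth : 0 <= th <= 1) by nra.
    assert (eV : V = th * K + (1 - th) * G) by lra.
    assert (eW : K + G - V = (1 - th) * K + (1 - (1 - th)) * G) by (rewrite eV; ring).
    pose proof (rpow_le_l U (K + G - V) q ltac:(lra) ltac:(lra)).
    rewrite (rpow_Rpower V), (rpow_Rpower (K + G - V)) in * by lra.
    rewrite (rpow_Rpower K), (rpow_Rpower G) by lra.
    pose proof (Rpower_convex K G th q ltac:(lra) hG hth hq).
    pose proof (Rpower_convex K G (1 - th) q ltac:(lra) hG ltac:(lra) hq).
    rewrite <- eV in *; rewrite <- eW in *; lra.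
Qed.

Lemma two_le_sqr_of_cond lam q : 1 < lam -> 1 <= q ->
  lam ^ 2 * rpow (1 - 1 / lam ^ 2) q >= 1 -> 2 <= lam ^ 2.
Proof.
  intros hlam hq hcond.
  assert (hinv : lam ^ 2 * (1 / lam ^ 2) = 1) by (field; nra).
  assert (hw : 0 < 1 / lam ^ 2 < 1) by nra.
  pose proof (rpow_le_self (1 - 1 / lam ^ 2) q ltac:(lra) hq).
  assert (lam ^ 2 * (1 - 1 / lam ^ 2) = lam ^ 2 - 1) by (field; nra).
  nra.
Qed.

Lemma sqrt_one_sub_sqr_mul_le x y : x ^ 2 <= 1 -> y ^ 2 <= 1 ->
  sqrt (1 - x ^ 2) * sqrt (1 - y ^ 2) <= 1 - (x ^ 2 + y ^ 2) / 2.
Proof.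
  intros hx hy.
  pose proof (sqrt_sqrt (1 - x ^ 2) ltac:(lra)).
  pose proof (sqrt_sqrt (1 - y ^ 2) ltac:(lra)).
  pose proof (pow2_ge_0 (sqrt (1 - x ^ 2) - sqrt (1 - y ^ 2))).
  nra.
Qed.

Lemma sqrt_one_sub_sqr_le_1 x : sqrt (1 - x ^ 2) <= 1.
Proof.
  rewrite <- sqrt_1 at 2; apply sqrt_le_1_alt.
  pose proof (pow2_ge_0 x); lra.
Qed.

Lemma mul_le_1_of_le_inv lam z : 0 < lam -> z <= 1 / lam -> lam * z <= 1.
Proof.
  intros hlam hz.
  assert (lam * (1 / lam) = 1) by (field; lra).
  assert (lam * z <= lam * (1 / lam)) by (apply Rmult_le_compat_l; lra).
  lra.
Qed.

Definition cross_term a b x y : R :=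
  a ^ 2 + b ^ 2 - 2 * a * b * x * y
  + 2 * a * b * (sqrt (1 - x ^ 2) * sqrt (1 - y ^ 2)).

Lemma cross_term_le a b x y : 0 <= a -> 0 <= b -> 0 <= x -> 0 <= y ->
  cross_term a b x y <= (a + b) ^ 2.
Proof.
  intros ha hb hx hy; unfold cross_term.
  pose proof (sqrt_one_sub_sqr_le_1 x); pose proof (sqrt_one_sub_sqr_le_1 y).
  assert (0 <= sqrt (1 - x ^ 2)) by apply sqrt_pos.
  assert (0 <= sqrt (1 - y ^ 2)) by apply sqrt_pos.
  assert (hc : sqrt (1 - x ^ 2) * sqrt (1 - y ^ 2) <= 1) by nra.
  assert (hab : 0 <= a * b) by nra.
  assert (a * b * (sqrt (1 - x ^ 2) * sqrt (1 - y ^ 2)) <= a * b * 1)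
    by (apply Rmult_le_compat_l; lra).
  assert (0 <= a * b * (x * y)) by (apply Rmult_le_pos; nra).
  lra.
Qed.

Section Cross_term_bounds.

Variables a b lam x y : R.
Hypotheses (ha : 0 <= a) (hb : 0 <= b) (hlam : 0 < lam).
Hypotheses (hx : 0 <= x <= 1 / lam) (hy : 0 <= y <= 1 / lam).

Let hlx : lam * x <= 1 := mul_le_1_of_le_inv lam x hlam (proj2 hx).
Let hly : lam * y <= 1 := mul_le_1_of_le_inv lam y hlam (proj2 hy).

Lemma scaled_sum_le : lam * (a * x + b * y) <= a + b.
Proof.
  assert (a * (lam * x) <= a * 1) by (apply Rmult_le_compat_l; lra).
  assert (b * (lam * y) <= b * 1) by (apply Rmult_le_compat_l; lra).
  nra.
Qed.

Lemma scaled_sqr_add_cross_term_le : 2 <= lam ^ 2 ->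
  (lam * (a * x + b * y)) ^ 2 + cross_term a b x y
  <= (a + b) ^ 2 + (a ^ 2 + b ^ 2 - 4 * a * b / lam ^ 2 + 2 * a * b).
Proof.
  intros hlam2; set (m := / lam ^ 2).
  assert (hm : lam ^ 2 * m = 1) by (unfold m; field; lra).
  assert (hX : (lam * x) ^ 2 <= 1) by (assert (0 <= lam * x) by nra; nra).
  assert (hY : (lam * y) ^ 2 <= 1) by (assert (0 <= lam * y) by nra; nra).
  assert (hm0 : 0 < m) by (unfold m; apply Rinv_0_lt_compat; nra).
  assert (hsqr_le : forall z, (lam * z) ^ 2 <= 1 -> z ^ 2 <= m).
  { intros z hz.
    replace (z ^ 2) with ((lam * z) ^ 2 * m) by (rewrite <- (Rmult_1_r (z ^ 2)), <- hm; ring).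
    nra. }
  pose proof (hsqr_le x hX) as hxm; pose proof (hsqr_le y hY) as hym.
  assert (hxy : x * y <= (x ^ 2 + y ^ 2) / 2) by (pose proof (pow2_ge_0 (x - y)); nra).
  pose proof (sqrt_one_sub_sqr_mul_le x y ltac:(nra) ltac:(nra)) as hc.
  (* the coefficient of [2ab] once [sqrt (1-x^2) sqrt (1-y^2)] is replaced by its bound *)
  assert (hcoef : (lam ^ 2 - 1) * (x * y) - (x ^ 2 + y ^ 2) / 2 + 2 * m - 1 <= 0) by nra.
  assert (hab : 0 <= a * b) by nra.
  unfold cross_term, Rdiv; fold m.
  nra.
Qed.

End Cross_term_bounds.

Lemma cross_term_bound_pos a b lam : 0 < a -> 0 <= b -> 2 <= lam ^ 2 ->
  0 < a ^ 2 + b ^ 2 - 4 * a * b / lam ^ 2 + 2 * a * b.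
Proof.
  intros ha hb hlam2.
  assert (/ lam ^ 2 <= / 2) by (apply Rinv_le_contravar; lra).
  assert (4 * a * b * / lam ^ 2 <= 4 * a * b * / 2)
    by (apply Rmult_le_compat_l; [nra | lra]).
  unfold Rdiv; nra.
Qed.

Lemma F_eq_sum_rpow xi eta p lam t x y :
  0 <= lam -> 0 <= xi * x + eta * t * y ->
  F xi eta p lam t x y
  = rpow ((lam * (xi * x + eta * t * y)) ^ 2) (p / 2)
    + rpow (cross_term xi (eta * t) x y) (p / 2).
Proof.
  intros hlam hs; unfold F, cross_term.
  rewrite rpow_mult_distr, <- rpow_sqr by (try apply Rmult_le_pos; lra).
  f_equal; f_equal; ring.
Qed.

Theorem lemma2 (xi eta p lam t : R)
  (hxi : 0 < xi) (heta : 0 < eta) (hp : 2 < p) (hlam : 1 < lam)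
  (hcond : lam ^ 2 * rpow (1 - 1 / lam ^ 2) (p / 2) >= 1)
  (ht0 : 0 <= t) (ht1 : t <= 1) :
  forall x1 y1 : R, 0 <= x1 <= 1 / lam -> 0 <= y1 <= 1 / lam ->
  F xi eta p lam t x1 y1 <=
  Rmax ((1 + rpow lam (- (2 * p / (p - 2)))) * rpow (xi + eta * t) p)
   (Rmax (rpow (xi + eta * t) p
          + rpow (xi ^ 2 + eta ^ 2 * t ^ 2 - 4 * eta * xi * t / lam ^ 2
                  + 2 * eta * xi * t) (p / 2))
         (rpow (xi + eta) p
          + rpow (xi + eta * t) (p - 2)
            * (2 * (xi - (2 * eta * xi - eta) * t) / lam ^ 2))).
Proof.
  intros x1 y1 hx hy.
  assert (hq : 1 <= p / 2) by lra.
  pose proof (two_le_sqr_of_cond lam (p / 2) hlam hq hcond) as hlam2.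
  assert (hb : 0 <= eta * t) by nra.
  assert (hs : 0 <= xi * x1 + eta * t * y1)
    by (apply Rplus_le_le_0_compat; apply Rmult_le_pos; lra).
  set (G := xi ^ 2 + (eta * t) ^ 2 - 4 * xi * (eta * t) / lam ^ 2 + 2 * xi * (eta * t)).
  apply Rle_trans with (rpow (xi + eta * t) p + rpow G (p / 2)).
  - rewrite F_eq_sum_rpow, (rpow_sqr (xi + eta * t)) by lra.
    apply rpow_sum_le_majorizing.
    + exact hq.
    + apply cross_term_bound_pos; lra.
    + apply pow_incr; split; [nra | apply scaled_sum_le; lra].
    + apply cross_term_le; lra.
    + apply scaled_sqr_add_cross_term_le; lra.
  - eapply Rle_trans; [|apply Rmax_r].
    replace G with (xi ^ 2 + eta ^ 2 * t ^ 2 - 4 * eta * xi * t / lam ^ 2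
                    + 2 * eta * xi * t) by (unfold G; field; lra).
    apply Rmax_l.
Qed.
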